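(* There is no function $V(t,x,m,P)$ which, for each $(t,P)$, is a polynomial of finite degree in $(x,m)$ (with coefficients depending smoothly on $(t,P)$) and satisfies $V_{xx}>0$, such that $V$ solves the reduced HJB equation $$0=V_t+\frac{P^2}{2}V_{mm}-P^2V_P-\frac{(mV_x+PV_{xm})^2}{2V_{xx}}-\frac{\tau}{2}\log\!\Big(\frac{2\pi\tau}{\sigma^2V_{xx}}\Big),$$ where $\pi=3.14159\ldots$.
   Context: Constants $\sigma>0$, $\tau>0$; $P\ge 0$ is the posterior variance variable and $m$ the posterior mean variable of an unknown Sharpe ratio, $x$ is discounted wealth. *)

From Stdlib Require Import Reals.
From Coquelicot Require Import Coquelicot.
Open Scope R_scope.

(* The (open) domain of the time / posterior-variance variables:
   0 < t < T and P > 0 (interior of [0,T] x [0,oo)). *)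
Definition dom (T t P : R) : Prop := 0 < t < T /\ 0 < P.

(* f : R -> R -> R is C^infinity on the open set U: there is a family
   D i j of functions (D i j = d^i/dt^i d^j/dP^j f) with D 0 0 = f on U,
   each D i j jointly continuous on U, and D (i+1) j (resp. D i (j+1)) the
   partial derivative of D i j in the first (resp. second) variable on U. *)
Definition smooth2_on (U : R -> R -> Prop) (f : R -> R -> R) : Prop :=
  exists D : nat -> nat -> R -> R -> R,
    (forall t P, U t P -> D 0%nat 0%nat t P = f t P) /\
    (forall i j t P, U t P ->
       is_derive (fun s => D i j s P) t (D (S i) j t P) /\
       is_derive (fun q => D i j t q) P (D i (S j) t P) /\
       continuous (fun z : R * R => D i j (fst z) (snd z)) (t, P)).

Definition polyV (N : nat) (c : nat -> nat -> R -> R -> R) (t x m P : R) : R :=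
  sum_f_R0 (fun i => sum_f_R0 (fun j => c i j t P * x ^ i * m ^ j) N) N.

Definition V_t (V : R -> R -> R -> R -> R) t x m P := Derive (fun s => V s x m P) t.
Definition V_P (V : R -> R -> R -> R -> R) t x m P := Derive (fun q => V t x m q) P.
Definition V_x (V : R -> R -> R -> R -> R) t x m P := Derive (fun y => V t y m P) x.
Definition V_xx (V : R -> R -> R -> R -> R) t x m P :=
  Derive (fun y => V_x V t y m P) x.
Definition V_m (V : R -> R -> R -> R -> R) t x m P := Derive (fun n => V t x n P) m.
Definition V_mm (V : R -> R -> R -> R -> R) t x m P :=
  Derive (fun n => V_m V t x n P) m.
Definition V_xm (V : R -> R -> R -> R -> R) t x m P :=
  Derive (fun n => V_x V t x n P) m.

Definition reduced_HJB (sigma tau : R) (V : R -> R -> R -> R -> R) (t x m P : R) : Prop :=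
  0 = V_t V t x m P + P ^ 2 / 2 * V_mm V t x m P - P ^ 2 * V_P V t x m P
      - (m * V_x V t x m P + P * V_xm V t x m P) ^ 2 / (2 * V_xx V t x m P)
      - tau / 2 * ln (2 * PI * tau / (sigma ^ 2 * V_xx V t x m P)).

(* Fix (t, P, m). V is a polynomial in x, and multiplying the equation by V_xx shows that
   U / V_xx + (tau / 2) ln V_xx is constant in x for some polynomial U.  Differentiating gives
   U' V_xx - U V_xx' = -(tau / 2) V_xx V_xx', which is impossible for a nonconstant V_xx by
   comparing top coefficients.  So V is quadratic in x, V_xx = 2 a with a(t, P, m) > 0
   polynomial in m, and the x^2-coefficient of the equation reads
   (m a + P a_m)^2 = a (a_t + P^2/2 a_mm - P^2 a_P).  The left side has m-degree 2 deg a + 2;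
   once the coefficients of a above some degree vanish on the whole (t, P)-domain, so do their
   t- and P-derivatives, the right side has m-degree at most 2 deg a, and the degree of a
   drops.  Downward induction gives a = 0, contradicting a > 0. *)

From Stdlib Require Import Reals Lra.
From Coquelicot Require Import Coquelicot.
From mathcomp Require Import all_boot all_algebra polyorder zify Rstruct.
Set Implicit Arguments.
Unset Strict Implicit.
Import GRing.Theory Num.Theory.

Section PolyAlgebra.
Local Open Scope ring_scope.

Lemma eq_poly_horner (K : numDomainType) (p q : {poly K}) :
  (forall x, p.[x] = q.[x]) -> p = q.
Proof.
move=> pq; apply/eqP; rewrite -subr_eq0; apply/eqP.
apply: (@roots_geq_poly_eq0 _ _ [seq i%:R | i <- iota 0 (size (p - q))]).
- by apply/allP => y _; rewrite /root hornerD hornerN pq subrr.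
- by rewrite map_inj_uniq ?iota_uniq // => i j /eqP; rewrite eqr_nat => /eqP.
- by rewrite size_map size_iota.
Qed.

Lemma eq0_of_sqr_mulX_add_deriv (K : idomainType) (a g : {poly K}) (b : K) :
  (size g <= size a)%N -> (a * 'X + b *: a^`()) ^+ 2 = a * g -> a = 0.
Proof.
move=> le_ga E; apply/eqP; apply: contraT => a0.
have sZ : size (a * 'X + b *: a^`()) = (size a).+1.
  rewrite size_polyDl size_mulX //.
  exact: leq_ltn_trans (size_scale_leq _ _) (leq_trans (lt_size_deriv a0) _).
have Z0 : a * 'X + b *: a^`() != 0 by rewrite -size_poly_gt0 sZ.
have := size_polyMleq a g; rewrite -E size_mul // sZ.
by have := size_poly_gt0 a; rewrite a0; lia.
Qed.

Lemma size_leq_of_sqr_mulX_add_deriv (K : idomainType) (a g : {poly K}) (b : K) n :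
  (a * 'X + b *: a^`()) ^+ 2 = a * g -> (size g <= n.+1)%N -> (size a <= n)%N.
Proof.
move=> E le_gn; rewrite leqNgt; apply/negP => lt_na.
have a0 := eq0_of_sqr_mulX_add_deriv (leq_trans le_gn lt_na) E.
by move: lt_na; rewrite a0 size_poly0.
Qed.

Section Wronskian.
Variable K : realDomainType.
Implicit Types p q U W : {poly K}.

Lemma lead_coef_deriv p : lead_coef p^`() = lead_coef p *+ (size p).-1.
Proof.
have [/size1_polyC -> | lt1p] := leqP (size p) 1.
  by rewrite derivC lead_coef0 size_polyC; case: (_ != 0); rewrite mulr0n.
by rewrite !lead_coefE size_deriv coef_deriv prednK // -ltnS (ltn_predK lt1p).
Qed.

Lemma coef_mul_deriv_top p q :
  (p^`() * q)`_((size p + size q).-2.-1) = lead_coef p * lead_coef q *+ (size p).-1.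
Proof.
have [-> | p0] := eqVneq p 0; first by rewrite deriv0 !mul0r coef0 lead_coef0 mul0r mul0rn.
rewrite -mulrnAl -lead_coef_deriv mul_lead_coef size_deriv (polySpred p0) /=.
by case: (size q) => [|[|k]]; rewrite ?addn0 ?addn1 ?addnS.
Qed.

Lemma size_wronskian_leq U W :
  (size (U^`() * W - U * W^`())%R <= (size U + size W).-2)%N.
Proof.
have [-> | U0] := eqVneq U 0; first by rewrite deriv0 !mul0r subr0 size_poly0.
have [-> | W0] := eqVneq W 0; first by rewrite deriv0 !mulr0 subr0 size_poly0.
apply: leq_trans (size_polyD _ _) _; rewrite size_polyN geq_max.
by apply/andP; split; apply: leq_trans (size_polyMleq _ _) _;
  rewrite size_deriv (polySpred U0) (polySpred W0); lia.
Qed.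

Lemma coef_wronskian_top U W :
  (U^`() * W - U * W^`())`_((size U + size W).-2.-1) =
  lead_coef U * lead_coef W *+ (size U).-1 - lead_coef U * lead_coef W *+ (size W).-1.
Proof.
rewrite coefB coef_mul_deriv_top [U * _]mulrC addnC coef_mul_deriv_top.
by rewrite [lead_coef W * _]mulrC.
Qed.

(* The top coefficient of U^`() * W - U * W^`() is lead U * lead W * (size U - size W): the
   polynomial is too long unless size U = size W, and then too short, to be a nonzero multiple
   of W * W^`(). *)
Lemma deriv_eq0_of_wronskian U W c : c != 0 ->
  U^`() * W - U * W^`() = c *: (W * W^`()) -> W^`() = 0.
Proof.
move=> c0 E; apply/eqP; apply: contraT => W'0.
have W0 : W != 0 by apply: contra W'0 => /eqP ->; rewrite deriv0.
have W'1 : (0 < (size W).-1)%N by rewrite -size_deriv size_poly_gt0.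
have sE : size (U^`() * W - U * W^`()) = (size W + (size W).-1).-1.
  by rewrite E size_scale // size_mul // size_deriv.
have leWU : (size W <= size U)%N.
  by have := size_wronskian_leq U W; rewrite sE; lia.
have lU : lead_coef U != 0 by rewrite lead_coef_eq0 -size_poly_gt0; lia.
have lW : lead_coef W != 0 by rewrite lead_coef_eq0.
have := coef_wronskian_top U W; case: ltngtP leWU => // [ltWU | <-] _.
  rewrite nth_default ?sE; last by lia.
  move/eqP; rewrite eq_sym subr_eq0 => /eqP /(mulrIn (mulf_neq0 lU lW)); lia.
have -> : ((size W + size W).-2.-1 = (size W + size (W^`())).-2)%N by rewrite size_deriv; lia.
rewrite subrr E coefZ -mul_lead_coef => /eqP.
by rewrite !mulf_eq0 (negbTE c0) (negbTE lW) lead_coef_eq0 (negbTE W'0).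
Qed.

End Wronskian.

End PolyAlgebra.

Open Scope R_scope.

Section PolyDerive.
Local Open Scope ring_scope.

Lemma is_derive_horner (p : {poly R}) x : is_derive (horner p) x p^`().[x].
Proof.
elim/poly_ind: p => [|p a IHp].
  rewrite deriv0 horner0.
  apply: (@is_derive_ext R_AbsRing R_NormedModule (fun=> 0)) => [y|]; last exact: is_derive_const.
  by rewrite horner0.
rewrite derivMXaddC hornerD hornerM hornerX.
apply: (is_derive_ext (fun y => p.[y] * y + a)) => [y|].
  by rewrite hornerMXaddC.
have := is_derive_plus _ _ _ _ _
  (is_derive_mult _ _ _ _ _ IHp (is_derive_id x) Rmult_comm) (is_derive_const a x).
rewrite /plus /mult /zero /=.
have -> : (Hierarchy.one : R_AbsRing) = 1%R by [].
by rewrite !RmultE !RplusE mulr1 addr0 addrC.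
Qed.

(* The partial derivative in the inner variable 'Y; u.[x, y] substitutes x for 'X and y
   for 'Y. *)
Definition derivY {K : nzRingType} (u : {poly {poly K}}) : {poly {poly K}} :=
  map_poly deriv u.

Lemma coef_derivY (K : nzRingType) (u : {poly {poly K}}) i :
  (derivY u)`_i = (u`_i)^`().
Proof. exact: coef_map. Qed.

Lemma deriv_hornerC (K : comNzRingType) (u : {poly {poly K}}) c :
  u.[c%:P]^`() = (derivY u).[c%:P].
Proof.
elim/poly_ind: u => [|u a IHu]; first by rewrite /derivY map_poly0 !horner0 deriv0.
have -> : derivY (u * 'X + a%:P) = derivY u * 'X + a^`()%:P.
  apply/polyP => i; rewrite coef_derivY !coefD !coefMX !coefC.
  by case: i => [|i]; rewrite ?coef_derivY derivD ?deriv0 ?addr0 ?add0r.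
by rewrite !(hornerD, hornerMX, hornerC) derivD derivM derivC mulr0 addr0 IHu.
Qed.

Lemma hornerXY_map (K : comNzRingType) (u : {poly {poly K}}) x y :
  u.[x, y] = (map_poly (horner_eval y) u).[x].
Proof. by rewrite -{2}[x](hornerC x y) -horner_evalE horner_map. Qed.

Lemma Derive_hornerXY_x (u : {poly {poly R}}) (x y : R) :
  Derive (fun x : R => u.[x, y]) x = u^`().[x, y].
Proof.
apply: is_derive_unique.
apply: (@is_derive_ext R_AbsRing R_NormedModule (horner (map_poly (horner_eval y) u))).
  by move=> z; rewrite hornerXY_map.
by rewrite hornerXY_map -deriv_map; apply: is_derive_horner.
Qed.

Lemma Derive_hornerXY_y (u : {poly {poly R}}) (x y : R) :
  Derive (fun y : R => u.[x, y]) y = (derivY u).[x, y].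
Proof. by apply: is_derive_unique; rewrite -deriv_hornerC; apply: is_derive_horner. Qed.

End PolyDerive.

Definition Vpoly (N : nat) (c : nat -> nat -> R -> R -> R) (t P : R) :
    {poly {poly R}} :=
  (\poly_(i < N.+1) \poly_(j < N.+1) c i j t P)%R.

Lemma hornerXY_Vpoly N c t x m P : polyV N c t x m P = (Vpoly N c t P).[x, m]%R.
Proof.
rewrite /polyV /Vpoly sum_f_R0E horner_poly horner_sum big_mkord.
apply: eq_bigr => i _.
rewrite sum_f_R0E big_mkord hornerM horner_exp !hornerC horner_poly.
by rewrite mulr_suml; apply: eq_bigr => j _; rewrite !RpowE mulrAC.
Qed.

Section PolyVDerivatives.
Variables (N : nat) (c : nat -> nat -> R -> R -> R) (t P : R).
Local Notation u := (Vpoly N c t P).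

Lemma V_x_polyV x m : V_x (polyV N c) t x m P = (u^`()).[x, m]%R.
Proof.
rewrite /V_x -Derive_hornerXY_x; apply: Derive_ext => y; exact: hornerXY_Vpoly.
Qed.

Lemma V_xx_polyV x m : V_xx (polyV N c) t x m P = (u^`()^`()).[x, m]%R.
Proof. rewrite /V_xx -Derive_hornerXY_x; apply: Derive_ext => y; exact: V_x_polyV. Qed.

Lemma V_m_polyV x m : V_m (polyV N c) t x m P = (derivY u).[x, m]%R.
Proof.
rewrite /V_m -Derive_hornerXY_y; apply: Derive_ext => n; exact: hornerXY_Vpoly.
Qed.

Lemma V_mm_polyV x m : V_mm (polyV N c) t x m P = (derivY (derivY u)).[x, m]%R.
Proof. rewrite /V_mm -Derive_hornerXY_y; apply: Derive_ext => n; exact: V_m_polyV. Qed.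

Lemma V_xm_polyV x m : V_xm (polyV N c) t x m P = (derivY u^`()).[x, m]%R.
Proof. rewrite /V_xm -Derive_hornerXY_y; apply: Derive_ext => n; exact: V_x_polyV. Qed.

End PolyVDerivatives.

Lemma is_derive_sum_f_R0 (f : nat -> R -> R) (df : nat -> R) n x :
  (forall k, is_derive (f k) x (df k)) ->
  is_derive (fun y => sum_f_R0 (fun k => f k y) n) x (sum_f_R0 df n).
Proof.
move=> fd; rewrite -sum_n_Reals.
apply: (is_derive_ext (fun y => sum_n (fun k => f k y) n)) => [y|].
  exact: sum_n_Reals.
exact: is_derive_sum_n.
Qed.

Definition partial_t (c : nat -> nat -> R -> R -> R) i j t P :=
  Derive (fun s => c i j s P) t.
Definition partial_P (c : nat -> nat -> R -> R -> R) i j t P :=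
  Derive (fun q => c i j t q) P.

Lemma V_t_polyV N c t x m P : (forall i j, ex_derive (fun s => c i j s P) t) ->
  V_t (polyV N c) t x m P = (Vpoly N (partial_t c) t P).[x, m]%R.
Proof.
move=> cd; rewrite -hornerXY_Vpoly; apply: is_derive_unique.
do 2![apply: is_derive_sum_f_R0 => ?].
by apply: is_derive_scal_l; apply: is_derive_scal_l; apply: Derive_correct.
Qed.

Lemma V_P_polyV N c t x m P : (forall i j, ex_derive (fun q => c i j t q) P) ->
  V_P (polyV N c) t x m P = (Vpoly N (partial_P c) t P).[x, m]%R.
Proof.
move=> cd; rewrite -hornerXY_Vpoly; apply: is_derive_unique.
do 2![apply: is_derive_sum_f_R0 => ?].
by apply: is_derive_scal_l; apply: is_derive_scal_l; apply: Derive_correct.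
Qed.

Section Domain.
Variables (T t P : R).
Hypothesis tP : dom T t P.

Lemma locally_dom_t : locally t (fun s => dom T s P).
Proof.
case: tP => [[t0 tT] P0].
apply: (filter_imp (fun s => 0 < s /\ s < T)) => [s [? ?] //|].
exact: (open_and _ _ (open_gt 0) (open_lt T) t (conj t0 tT)).
Qed.

Lemma locally_dom_P : locally P (fun q => dom T t q).
Proof.
case: tP => t0T P0.
by apply: (filter_imp (fun q => 0 < q)) => [q ? //|]; exact: open_gt.
Qed.

Lemma smooth2_on_ex_derive_t f : smooth2_on (dom T) f -> ex_derive (fun s => f s P) t.
Proof.
case=> [D [Df dD]]; exists (D 1%nat 0%nat t P).
apply: (is_derive_ext_loc (fun s => D 0%nat 0%nat s P)); last exact: (dD _ _ _ _ tP).1.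
by apply: filter_imp locally_dom_t => s; apply: Df.
Qed.

Lemma smooth2_on_ex_derive_P f : smooth2_on (dom T) f -> ex_derive (fun q => f t q) P.
Proof.
case=> [D [Df dD]]; exists (D 0%nat 1%nat t P).
apply: (is_derive_ext_loc (fun q => D 0%nat 0%nat t q)); last exact: (dD _ _ _ _ tP).2.1.
by apply: filter_imp locally_dom_P => q; apply: Df.
Qed.

Lemma Derive_t_eq0 f :
  (forall s q, dom T s q -> f s q = 0) -> Derive (fun s => f s P) t = 0.
Proof.
move=> f0; rewrite (Derive_ext_loc _ (fun=> 0)) ?Derive_const //.
by apply: filter_imp locally_dom_t => s; apply: f0.
Qed.

Lemma Derive_P_eq0 f :
  (forall s q, dom T s q -> f s q = 0) -> Derive (fun q => f t q) P = 0.
Proof.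
move=> f0; rewrite (Derive_ext_loc _ (fun=> 0)) ?Derive_const //.
by apply: filter_imp locally_dom_P => q; apply: f0.
Qed.

End Domain.

Lemma deriv_eq0_of_ln_rational (U W : {poly R}) (a b : R) : a <> 0 ->
  (forall x, 0 < W.[x]%R) -> (forall x, U.[x]%R / W.[x]%R + a * ln W.[x]%R = b) ->
  (W^`() = 0)%R.
Proof.
move=> a0 W0 Ub.
have key x :
    U^`().[x]%R * W.[x]%R - U.[x]%R * W^`().[x]%R = - a * (W.[x]%R * W^`().[x]%R).
  have Wx0 : W.[x]%R <> 0 by apply: Rgt_not_eq.
  have d : is_derive (fun y => U.[y]%R / W.[y]%R + a * ln W.[y]%R) x
      ((U^`().[x]%R * W.[x]%R - U.[x]%R * W^`().[x]%R) / W.[x]%R ^ 2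
       + a * (W^`().[x]%R * / W.[x]%R)).
    apply: is_derive_plus.
      exact: is_derive_div (is_derive_horner _ _) (is_derive_horner _ _) Wx0.
    apply: is_derive_scal.
    exact: is_derive_comp _ _ _ _ _ (is_derive_ln _ (W0 x)) (is_derive_horner _ _).
  have d0 : is_derive (fun y => U.[y]%R / W.[y]%R + a * ln W.[y]%R) x 0.
    by apply: (is_derive_ext (fun=> b)) => [y|]; [rewrite Ub | apply: is_derive_const].
  have := is_derive_unique _ _ _ d; rewrite (is_derive_unique _ _ _ d0).
  move: (U^`().[x]%R) (W^`().[x]%R) (U.[x]%R) Wx0 => u' w' u; set w := W.[x]%R => w0 e.
  have -> : u' * w - u * w' = w ^ 2 * ((u' * w - u * w') / w ^ 2) by field.
  have -> : (u' * w - u * w') / w ^ 2 = - (a * (w' * / w)) by lra.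
  by field.
apply: (@deriv_eq0_of_wronskian _ U W (- a)); first by rewrite oppr_eq0; apply/eqP.
apply: eq_poly_horner => x.
by rewrite hornerD hornerN !hornerM hornerZ hornerM; exact: key.
Qed.

Lemma coef2_of_horner_identity (A Q : {poly R}) w K : w <> 0 ->
  (forall x, 0 = A.[x]%R - Q.[x]%R ^ 2 / w - K) -> (Q`_2)%R = 0 ->
  (A`_2)%R * w = (Q`_1)%R ^ 2.
Proof.
move=> w0 AQ Q2.
have e : (A - w^-1 *: (Q * Q) - K%:P = 0)%R.
  apply: eq_poly_horner => x.
  rewrite horner0 !hornerD !hornerN hornerZ hornerM hornerC -RinvE -!RmultE -!RminusE.
  rewrite [RHS](AQ x); match goal with |- ?a = ?b => change (@eq R a b) end.
  by set a := A.[x]%R; set q := Q.[x]%R; field.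
have := congr1 (fun p : {poly R} => (p`_2)%R) e.
rewrite coef0 !coefD !coefN coefZ coefC coefM /=.
rewrite !big_ord_recr big_ord0 /= Q2 subr0 => /eqP; rewrite subr_eq0 => /eqP ->.
set q := (Q`_1)%R; rewrite mulr0 mul0r !addr0 add0r -RinvE -!RmultE.
by match goal with |- ?a = ?b => change (@eq R a b) end; field.
Qed.

Lemma coef_Vpoly_partial_t N c t P i j :
  (((Vpoly N (partial_t c) t P)`_i)`_j)%R = Derive (fun s => ((Vpoly N c s P)`_i)`_j)%R t.
Proof.
rewrite /Vpoly !coef_poly; under Derive_ext => s do rewrite coef_poly.
case: (i < N.+1)%N; rewrite ?coef_poly ?coef0;
  under Derive_ext => s do rewrite ?coef_poly ?coef0.
  by case: (j < N.+1)%N; rewrite ?Derive_const.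
by rewrite Derive_const.
Qed.

Lemma coef_Vpoly_partial_P N c t P i j :
  (((Vpoly N (partial_P c) t P)`_i)`_j)%R = Derive (fun q => ((Vpoly N c t q)`_i)`_j)%R P.
Proof.
rewrite /Vpoly !coef_poly; under Derive_ext => q do rewrite coef_poly.
case: (i < N.+1)%N; rewrite ?coef_poly ?coef0;
  under Derive_ext => q do rewrite ?coef_poly ?coef0.
  by case: (j < N.+1)%N; rewrite ?Derive_const.
by rewrite Derive_const.
Qed.

Section ReducedHJB.
Variables (sigma tau T : R) (N : nat) (c : nat -> nat -> R -> R -> R).
Hypotheses (sigma_gt0 : 0 < sigma) (tau_gt0 : 0 < tau).
Hypothesis c_smooth : forall i j, smooth2_on (dom T) (c i j).
Hypothesis V_solution : forall t P x m, dom T t P ->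
  0 < V_xx (polyV N c) t x m P /\ reduced_HJB sigma tau (polyV N c) t x m P.

Section Slice.
Variables (t P : R).
Hypothesis tP : dom T t P.

(* At fixed m, the x-polynomials W m, Q m and A m are V_xx, m V_x + P V_xm and
   V_t + P^2/2 V_mm - P^2 V_P. *)
Let u := Vpoly N c t P.
Let ev m (w : {poly {poly R}}) : {poly R} := map_poly (horner_eval m) w.
Let W m := ev m (u^`()^`())%R.
Let Q m := (m *: ev m (u^`()) + P *: ev m (derivY u^`()))%R.
(* Named so that they stay Stdlib expressions: inside %R, P ^ 2 would be an integer power. *)
Let half_P2 := P ^ 2 / 2.
Let P2 := P ^ 2.
Let A m := (ev m (Vpoly N (partial_t c) t P) + half_P2 *: ev m (derivY (derivY u))
            - P2 *: ev m (Vpoly N (partial_P c) t P))%R.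

Lemma HJB_slice m x : 0 < (W m).[x]%R /\
  0 = (A m).[x]%R - (Q m).[x]%R ^ 2 / (2 * (W m).[x]%R)
      - tau / 2 * ln (2 * PI * tau / sigma ^ 2 / (W m).[x]%R).
Proof.
have [Vxx_gt0 HJB] := V_solution x m tP.
have ex_t i j := smooth2_on_ex_derive_t tP (c_smooth i j).
have ex_P i j := smooth2_on_ex_derive_P tP (c_smooth i j).
move: Vxx_gt0 HJB; rewrite /reduced_HJB (V_t_polyV _ _ _ ex_t) (V_P_polyV _ _ _ ex_P).
rewrite V_mm_polyV V_x_polyV V_xm_polyV V_xx_polyV !hornerXY_map => w_gt0 HJB.
split=> //; rewrite /A /Q !(hornerD, hornerN, hornerZ).
have w0 : (W m).[x]%R <> 0 by apply: Rgt_not_eq.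
rewrite (_ : 2 * PI * tau / sigma ^ 2 / _ = 2 * PI * tau / (sigma ^ 2 * (W m).[x]%R)).
  exact: HJB.
by field; split; [exact: w0 | apply: Rgt_not_eq].
Qed.

Lemma W_deriv_eq0 m : ((W m)^`() = 0)%R.
Proof.
have k_gt0 : 0 < 2 * PI * tau / sigma ^ 2.
  by apply: Rdiv_lt_0_compat; [have := PI_RGT_0; nra | apply: pow_lt].
apply: (@deriv_eq0_of_ln_rational (A m * W m - 2^-1 *: (Q m * Q m))%R _ (tau / 2)
  (tau / 2 * ln (2 * PI * tau / sigma ^ 2))).
- by apply: Rgt_not_eq; lra.
- by move=> x; have [] := HJB_slice m x.
move=> x; have [w_gt0 e] := HJB_slice m x; rewrite ln_div // in e.
rewrite hornerD hornerN hornerZ !hornerM -RinvE -!RmultE -RminusE.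
move: e w_gt0; set a := (A m).[x]%R; set q := (Q m).[x]%R; set w := (W m).[x]%R => e w_gt0.
have -> : (a * w - / 2 * (q * q)) / w = a - q ^ 2 / (2 * w) by field; apply: Rgt_not_eq.
lra.
Qed.

Lemma coef3_Vpoly_eq0 : (u`_3 = 0)%R.
Proof.
apply: eq_poly_horner => m; apply/eqP; rewrite horner0.
have := congr1 (fun p : {poly R} => (p`_0)%R) (W_deriv_eq0 m).
rewrite /= coef0 coef_deriv coef_map /= !coef_deriv horner_evalE !hornerMn => /eqP.
by rewrite !mulrn_eq0.
Qed.

Lemma W_const m : (W m = ((u`_2).[m] *+ 2)%:P)%R.
Proof.
rewrite [LHS]size1_polyC.
  by rewrite /W /ev coef_map /= !coef_deriv horner_evalE !hornerMn mulr1n.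
by rewrite -subn_eq0 subn1 -size_deriv W_deriv_eq0 size_poly0.
Qed.

Lemma coef2_Vpoly_gt0 m : 0 < (u`_2).[m]%R.
Proof. by have [] := HJB_slice m 0; rewrite W_const hornerC mulr2n -RplusE; lra. Qed.

Lemma coef2_Vpoly_sqr :
  ((u`_2 * 'X + P *: (u`_2)^`()) ^+ 2 = u`_2 * ((Vpoly N (partial_t c) t P)`_2
     + half_P2 *: (u`_2)^`()^`() - P2 *: (Vpoly N (partial_P c) t P)`_2))%R.
Proof.
apply: eq_poly_horner => m.
have Q2 : ((Q m)`_2 = 0)%R.
  rewrite /Q /ev coefD !coefZ !coef_map /= ?horner_evalE coef_deriv coef3_Vpoly_eq0.
  by rewrite mul0rn deriv0 horner0 !mulr0 addr0.
have w0 : 2 * ((u`_2).[m] *+ 2)%R <> 0.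
  by have := coef2_Vpoly_gt0 m; rewrite mulr2n -RplusE => ?; apply: Rgt_not_eq; lra.
have AQ x : 0 = (A m).[x]%R - (Q m).[x]%R ^ 2 / (2 * ((u`_2).[m] *+ 2)%R)
    - tau / 2 * ln (2 * PI * tau / sigma ^ 2 / ((u`_2).[m] *+ 2)%R).
  by have [_] := HJB_slice m x; rewrite W_const hornerC.
have := coef2_of_horner_identity w0 AQ Q2.
rewrite /A /Q /ev !coefD !coefN !coefZ !coef_map /= ?horner_evalE !coef_deriv.
rewrite derivMn !hornerMn horner_exp !(hornerD, hornerN, hornerZ, hornerM, hornerX).
set a := (u`_2).[m]%R; set a' := ((u`_2)^`()).[m]%R.
set g1 := _.[m]%R; set g2 := _.[m]%R; set g3 := _.[m]%R.
rewrite !mulr2n expr2 -!RoppE -!RplusE -!RmultE => e.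
nra.
Qed.

End Slice.

Lemma size_coef2_Vpoly_pred n :
  (forall t P, dom T t P -> (size ((Vpoly N c t P)`_2)%R <= n)%N) ->
  forall t P, dom T t P -> (size ((Vpoly N c t P)`_2)%R <= n.-1)%N.
Proof.
case: n => [|n] le_n t P tP /=; first exact: le_n.
have vanish j : (n < j)%N -> forall s q, dom T s q -> (((Vpoly N c s q)`_2)`_j = 0)%R.
  by move=> lt_nj s q sq; apply: (leq_sizeP _ _ (le_n s q sq)).
apply: (size_leq_of_sqr_mulX_add_deriv (coef2_Vpoly_sqr tP)).
apply/leq_sizeP => j le_nj.
rewrite !coefD !coefN !coefZ coef_Vpoly_partial_t coef_Vpoly_partial_P !coef_deriv.
rewrite (Derive_t_eq0 tP (vanish j le_nj)) (Derive_P_eq0 tP (vanish j le_nj)).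
have lt_nj2 : (n < j.+2)%N by lia.
by rewrite (vanish _ lt_nj2 _ _ tP) !mul0rn -R0E !mulr0 subr0 add0r.
Qed.

End ReducedHJB.

Theorem proposition4p1 (sigma tau T : R) :
  0 < sigma -> 0 < tau -> 0 < T ->
  ~ (exists (N : nat) (c : nat -> nat -> R -> R -> R),
        (forall i j, smooth2_on (dom T) (c i j)) /\
        (forall t P x m, dom T t P ->
            0 < V_xx (polyV N c) t x m P /\
            reduced_HJB sigma tau (polyV N c) t x m P)).
Proof.
move=> sigma_gt0 tau_gt0 T_gt0 [N [c [c_smooth V_solution]]].
have size_coef2_le k t P : dom T t P -> (size ((Vpoly N c t P)`_2)%R <= N.+1 - k)%N.
  elim: k t P => [|k IHk] t P tP.
    by rewrite subn0 /Vpoly coef_poly; case: ifP => _; rewrite ?size_poly ?size_poly0.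
  by rewrite subnS; apply: (size_coef2_Vpoly_pred sigma_gt0 tau_gt0 c_smooth V_solution IHk).
have tP : dom T (T / 2) 1 by split; [split|]; lra.
have := coef2_Vpoly_gt0 sigma_gt0 tau_gt0 c_smooth V_solution tP 0.
move: (size_coef2_le N.+1 _ _ tP); rewrite subnn size_poly_leq0 => /eqP ->.
by rewrite horner0; apply: Rlt_irrefl.
Qed.
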